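(* Let $\phi:\mathbb{R}\to\mathbb{R}$ be a convex function and suppose there is a set $I\subseteq[0,1]$ and a strictly increasing function $h:I\to\mathbb{R}$ such that for every $\eta\in[0,1]$ the set $\arg\min_{\alpha\in\mathbb{R}}\{\eta\,\phi(\alpha)+(1-\eta)\phi(-\alpha)\}$ equals $\{h(\eta)\}$ if $\eta\in I$ and is empty if $\eta\notin I$. Then the one-vs-all loss $L^{\mathrm{OVA}}_\phi$ is top-$k$ calibrated for every $1\le k\le m$.
   Context: Classes $\mathcal{Y}=\{1,\dots,m\}$, $m\ge 2$. Top-$k$ error: for $y\in\mathcal{Y}$, $g\in\mathbb{R}^m$, $\mathrm{err}_k(y,g)=1$ if $|\{j\ne y: g_j\ge g_y\}|\ge k$ and $0$ otherwise. A loss $L:\mathcal{Y}\times\mathbb{R}^m\to\mathbb{R}$ is called top-$k$ calibrated if for every probability vector $p\in\mathbb{R}^m$ (playing the role of $(\Pr(Y=y\mid X=x))_y$) whose coordinates are pairwise distinct, $\arg\min_{g\in\mathbb{R}^m}\sum_y p_y L(y,g)\subseteq\arg\min_{g\in\mathbb{R}^m}\sum_y p_y\,\mathrm{err}_k(y,g)$ (the left set may be empty). For a binary margin loss $\phi:\mathbb{R}\to\mathbb{R}$, the one-vs-all (OVA) reduction corresponds to the multiclass loss $L^{\mathrm{OVA}}_\phi(y,g)=\phi(g_y)+\sum_{j\ne y}\phi(-g_j)$ (class $j$ is trained as positive versus all others as negative). *)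

(* real numbers are modelled by an arbitrary realFieldType. *)
From HB Require Import structures.
From mathcomp Require Import all_boot all_order all_algebra.
Set Implicit Arguments. Unset Strict Implicit. Unset Printing Implicit Defensive.
Import Order.TTheory GRing.Theory Num.Theory.
Local Open Scope ring_scope.

Definition is_argmin (T : Type) (R : realFieldType) (F : T -> R) (x : T) : Prop :=
  forall z : T, F x <= F z.

Definition err_k (R : realFieldType) (m k : nat) (y : 'I_m) (g : 'I_m -> R) : R :=
  if (k <= #|[set j : 'I_m | (j != y) && (g y <= g j)%R]|)%N then 1 else 0.

Definition topk_calibrated (R : realFieldType) (m k : nat)
    (L : 'I_m -> ('I_m -> R) -> R) : Prop :=
  forall p : 'I_m -> R,
    (forall y, 0 <= p y) -> \sum_(y < m) p y = 1 -> injective p ->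
    forall g : 'I_m -> R,
      is_argmin (fun g' => \sum_(y < m) p y * L y g') g ->
      is_argmin (fun g' => \sum_(y < m) p y * err_k k y g') g.

Definition ova_loss (R : realFieldType) (m : nat) (phi : R -> R)
    (y : 'I_m) (g : 'I_m -> R) : R :=
  phi (g y) + \sum_(j < m | j != y) phi (- g j).

Definition convex_fun (R : realFieldType) (phi : R -> R) : Prop :=
  forall x y t : R, 0 <= t -> t <= 1 ->
    phi (t * x + (1 - t) * y) <= t * phi x + (1 - t) * phi y.

From HB Require Import structures.
From mathcomp Require Import all_boot all_order all_algebra zify.
Set Implicit Arguments. Unset Strict Implicit. Unset Printing Implicit Defensive.
Import Order.TTheory GRing.Theory Num.Theory.
Local Open Scope ring_scope.

(* The conditional OVA risk is a sum of independent binary risks, one per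
   class, so a minimiser g solves each binary problem: g_j = h(p_j).  As h is
   strictly increasing, g ranks the classes exactly as p does, and ranking by
   p is optimal for the top-k error: the error set of such a g is a set of
   classes of smallest probability, and it is no larger than the error set of
   any other scoring, since at most k classes can be ranked among the top k. *)

Definition binary_risk (R : realFieldType) (phi : R -> R) (eta a : R) : R :=
  eta * phi a + (1 - eta) * phi (- a).

Lemma ova_risk_sum (R : realFieldType) m (phi : R -> R) (p g : 'I_m -> R) :
  \sum_y p y = 1 ->
  \sum_(y < m) p y * ova_loss phi y g = \sum_(j < m) binary_risk phi (p j) (g j).
Proof.
move=> p1; rewrite /ova_loss /binary_risk.
have sum_others y : \sum_(j < m | j != y) phi (- g j) = \sum_j phi (- g j) - phi (- g y).
  by rewrite [\sum_j _](bigD1 y) //= addrC addrK.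
under eq_bigr => y _ do rewrite sum_others mulrDr mulrBr.
rewrite !big_split /= -mulr_suml p1 mul1r sumrN.
congr (_ + _); rewrite -sumrB; apply: eq_bigr => j _.
by rewrite mulrBl mul1r.
Qed.

Lemma argmin_sum_coord (R : realFieldType) (T : finType) (c : T -> R -> R) (g : T -> R) :
  is_argmin (fun g' : T -> R => \sum_j c j (g' j)) g -> forall j, is_argmin (c j) (g j).
Proof.
move=> g_min j a; have := g_min (fun i => if i == j then a else g i).
rewrite (bigD1 j) //= [X in _ <= X](bigD1 j) //= eqxx.
rewrite [X in _ <= _ + X](eq_bigr (fun i => c i (g i))) ?lerD2r //.
by move=> i /negPf ->.
Qed.

Section Ranking.
Variables (R : realDomainType) (T : finType).
Implicit Types (p g : T -> R) (A B : {set T}).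

Definition card_above g y := #|[set j | (j != y) && (g y <= g j)]|.

Lemma card_above_lt p x y : p x < p y -> (card_above p y < card_above p x)%N.
Proof.
move=> lt_xy; apply/proper_card/properP; split.
  apply/subsetP => j; rewrite !inE => /andP[nyj le_yj].
  rewrite (le_trans (ltW lt_xy) le_yj) andbT; apply: contraTneq le_yj => ->.
  by rewrite -ltNge.
exists y; last by rewrite inE eqxx.
by rewrite inE (ltW lt_xy) andbT; apply: contraTneq lt_xy => ->; rewrite ltxx.
Qed.

Lemma card_above_monotone p g :
  injective p -> (forall x y, p x < p y -> g x < g y) -> card_above g =1 card_above p.
Proof.
move=> p_inj g_mono y; apply: eq_card => j; rewrite !inE.
have [-> //|nyj] := eqVneq j y; rewrite /=.
have [lt_yj|lt_jy|/p_inj eq_yj] := ltgtP (p y) (p j).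
- by rewrite ltW // g_mono.
- by rewrite leNgt g_mono.
- by rewrite eq_yj eqxx in nyj.
Qed.

(* Pigeonhole: the lowest-scoring element of the set is beaten by all others. *)
Lemma card_top_le g k : (#|[set y | (card_above g y < k)%N]| <= k)%N.
Proof.
set S := [set y | _].
have [y0 y0S|/eq_card0 ->] := pickP (mem S); last by [].
case: (arg_minP g y0S) => x xS x_min.
have {}xS : x \in S by [].
rewrite (cardsD1 x) xS add1n; move: xS; rewrite inE; apply: leq_ltn_trans.
apply/subset_leq_card/subsetP => j; rewrite !inE => /andP[-> jS] /=.
by apply: x_min; rewrite /S !inE.
Qed.

Lemma card_top_ge p k :
  injective p -> (k <= #|T|)%N -> (k <= #|[set y | (card_above p y < k)%N]|)%N.
Proof.
move=> p_inj kT; set A := [set y | (k <= card_above p y)%N].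
have -> : [set y | (card_above p y < k)%N] = ~: A by apply/setP => y; rewrite !inE ltnNge.
have [y0 y0A|A0] := pickP (mem A); last by move: kT; rewrite -(cardsC A) (eq_card0 A0).
case: (arg_maxP p y0A) => y yA y_max.
apply: leq_trans (_ : card_above p y <= _)%N; first by move: yA; rewrite !inE.
apply/subset_leq_card/subsetP => j; rewrite !inE => /andP[nyj le_yj].
apply: contra nyj => jA; apply/eqP/p_inj/eqP.
by rewrite eq_le le_yj andbT; apply: y_max; rewrite !inE.
Qed.

Lemma sum_lower_set_le p A B :
  (forall y, 0 <= p y) -> (forall x y, x \in A -> y \notin A -> p x <= p y) ->
  (#|A| <= #|B|)%N -> \sum_(y in A) p y <= \sum_(y in B) p y.
Proof.
move=> p_ge0 A_lower AB.
have [x0 x0A|A_full] := pickP (mem (~: A)); last first.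
  have AT : A = setT by apply/setP => y; move/negbT: (A_full y); rewrite !inE negbK.
  have BT : B = setT by apply/eqP; rewrite eqEcard subsetT -AT.
  by rewrite AT BT.
case: (arg_minP p x0A) => x xA x_min; set t := p x.
have {}xA : x \notin A by move: xA; rewrite !inE.
(* Each y contributes at most t * ([y in A] - [y in B]), whose sum is nonpositive. *)
rewrite -subr_le0 [\sum_(y in A) _]big_mkcond [\sum_(y in B) _]big_mkcond -sumrB /=.
apply: le_trans (_ : \sum_y t * ((if y \in A then 1 else 0) - (if y \in B then 1 else 0)) <= 0).
  apply: ler_sum => y _.
  case yA: (y \in A); case: (y \in B); rewrite ?subrr ?mulr0 ?lexx //.
  - by rewrite !subr0 mulr1; apply: A_lower; rewrite ?yA.
  - by rewrite !sub0r mulrN1 lerN2; apply: x_min; rewrite !inE yA.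
rewrite -mulr_sumr sumrB -!big_mkcond /= !sumr_const.
by apply: mulr_ge0_le0 (p_ge0 x) _; rewrite subr_le0 ler_nat.
Qed.

End Ranking.

Lemma topk_risk_sum (R : realFieldType) m k (p g : 'I_m -> R) :
  \sum_y p y * err_k k y g = \sum_(y in [set y | (k <= card_above g y)%N]) p y.
Proof.
rewrite [RHS]big_mkcond; apply: eq_bigr => y _; rewrite /err_k inE.
by case: ifP; rewrite ?mulr1 ?mulr0.
Qed.

Lemma topk_risk_min_of_monotone (R : realFieldType) m k (p g : 'I_m -> R) :
  (k <= m)%N -> (forall y, 0 <= p y) -> injective p ->
  (forall x y, p x < p y -> g x < g y) ->
  is_argmin (fun g' => \sum_y p y * err_k k y g') g.
Proof.
move=> km p_ge0 p_inj g_mono g'; rewrite !topk_risk_sum.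
have -> : [set y | (k <= card_above g y)%N] = [set y | (k <= card_above p y)%N].
  by apply/setP => y; rewrite !inE (card_above_monotone p_inj g_mono).
set A := [set y | _]; set B := [set y | _].
have setC_ltk (X : 'I_m -> R) : [set y | (card_above X y < k)%N] = ~: [set y | (k <= card_above X y)%N].
  by apply/setP => y; rewrite !inE ltnNge.
apply: sum_lower_set_le => // [x y|].
  rewrite !inE -ltnNge => le_kx lt_yk; rewrite leNgt.
  by apply: contraTN le_kx => /card_above_lt lt_xy; rewrite -ltnNge (ltn_trans lt_xy).
have := card_top_le g' k; have := card_top_ge (k := k) p_inj.
rewrite !setC_ltk -/A -/B card_ord => /(_ km).
by have := cardsC A; have := cardsC B; rewrite card_ord; lia.
Qed.

Theorem lemma2 (R : realFieldType) (m : nat) (phi : R -> R)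
    (I : R -> Prop) (h : R -> R) :
  (2 <= m)%N ->
  convex_fun phi ->
  (forall eta, I eta -> 0 <= eta /\ eta <= 1) ->
  (forall a b, I a -> I b -> a < b -> h a < h b) ->
  (forall eta, 0 <= eta -> eta <= 1 ->
     forall a : R,
       is_argmin (fun a' => eta * phi a' + (1 - eta) * phi (- a')) a <->
       (I eta /\ a = h eta)) ->
  forall k : nat, (1 <= k)%N -> (k <= m)%N ->
    @topk_calibrated R m k (@ova_loss R m phi).
Proof.
move=> _ _ _ h_mono h_argmin k _ km p p_ge0 p1 p_inj g g_min.
have p_le1 j : p j <= 1 by rewrite -p1 (bigD1 j) //= lerDl sumr_ge0.
have g_eq j : I (p j) /\ g j = h (p j).
  apply/(h_argmin _ (p_ge0 j) (p_le1 j)).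
  apply: (argmin_sum_coord (c := fun j => binary_risk phi (p j))) => g'.
  by have := g_min g'; rewrite /= !ova_risk_sum.
apply: topk_risk_min_of_monotone => // x y lt_xy.
by have [Ix ->] := g_eq x; have [Iy ->] := g_eq y; apply: h_mono.
Qed.
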